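(* Let $P$ be an ergodic transition matrix on a finite set $\mathcal{X}$ with pseudo-spectral gap $\gamma_{\mathsf{ps}}$ and let $k_{\mathsf{ps}}$ be as defined below. For every integer $p\ge 1$, $$p\,\gamma_{\mathsf{ps}}\Big(1-\frac{p\,k_{\mathsf{ps}}\gamma_{\mathsf{ps}}}{2}\Big)<\gamma^{(p)}_{\mathsf{ps}}\le p\,\gamma_{\mathsf{ps}} .$$ Consequently, if $p\le 1/(k_{\mathsf{ps}}\gamma_{\mathsf{ps}})$, then $\gamma^{(p)}_{\mathsf{ps}}\ge p\gamma_{\mathsf{ps}}/2$.
   Context: $P$ is row-stochastic on finite $\mathcal{X}$, ergodic (primitive), with unique stationary distribution $\pi>0$. The time reversal is $P^\star(x,x')=\pi(x')P(x',x)/\pi(x)$. For a transition matrix $Q$ with stationary distribution $\pi$, $Q^\star Q$ is self-adjoint in $\ell_2(\pi)$ (inner product $\sum_x f(x)g(x)\pi(x)$) with real eigenvalues $1=\lambda_1\ge\lambda_2\ge\dots\ge 0$ counted with multiplicity, and $\gamma_\dagger(Q)\doteq 1-\lambda_2(Q^\star Q)$. The pseudo-spectral gap is $\gamma_{\mathsf{ps}}(P)=\max_{k\ge 1}\gamma_\dagger(P^k)/k$ (a maximum which is attained and positive for ergodic $P$); $\gamma_{\mathsf{ps}}=\gamma_{\mathsf{ps}}(P)$, $k_{\mathsf{ps}}$ is the smallest integer $k$ with $\gamma_{\mathsf{ps}}=\gamma_\dagger(P^{k})/k$, and $\gamma^{(p)}_{\mathsf{ps}}\doteq\gamma_{\mathsf{ps}}(P^p)$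 is the pseudo-spectral gap of the $p$-skipped chain with transition matrix $P^p$. *)

From HB Require Import structures.
From mathcomp Require Import all_boot all_order all_algebra.
From mathcomp Require Import boolp classical_sets reals.
Set Implicit Arguments. Unset Strict Implicit. Unset Printing Implicit Defensive.
Import Order.TTheory GRing.Theory Num.Theory.
Local Open Scope ring_scope.
Local Open Scope classical_set_scope.

Section Defs.
Variables (R : realType) (n : nat).

Definition row_stochastic (P : 'M[R]_n) : Prop :=
  (forall i j, 0 <= P i j) /\ (forall i, \sum_j P i j = 1).

(* ergodic = primitive: some power has all entries positive *)
Definition primitive (P : 'M[R]_n) : Prop :=
  exists k : nat, forall i j, 0 < (P ^+ k) i j.

Definition stationary_dist (P : 'M[R]_n) (pi : 'rV[R]_n) : Prop :=
  (forall i, 0 <= pi 0 i) /\ \sum_i pi 0 i = 1 /\ pi *m P = pi.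

Definition time_reversal (pi : 'rV[R]_n) (Q : 'M[R]_n) : 'M[R]_n :=
  \matrix_(i, j) (pi 0 j * Q j i / pi 0 i).

Definition eigenvalues_desc (M : 'M[R]_n) : seq R :=
  xget [::] [set s : seq R | sorted (fun x y => y <= x) s /\
                             char_poly M = \prod_(x <- s) ('X - x%:P)].

Definition lambda2 (M : 'M[R]_n) : R := nth 0 (eigenvalues_desc M) 1.

Definition gamma_dagger (pi : 'rV[R]_n) (Q : 'M[R]_n) : R :=
  1 - lambda2 (time_reversal pi Q *m Q).

(* pseudo-spectral gap: max_{k >= 1} gamma_dagger(P^k)/k (attained; = sup) *)
Definition gamma_ps (pi : 'rV[R]_n) (P : 'M[R]_n) : R :=
  sup [set x : R | exists2 k : nat, (0 < k)%N & x = gamma_dagger pi (P ^+ k) / k%:R].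

Definition k_ps (pi : 'rV[R]_n) (P : 'M[R]_n) : nat :=
  xget 0%N [set k : nat | [/\ (0 < k)%N,
     gamma_dagger pi (P ^+ k) / k%:R = gamma_ps pi P &
     forall j : nat, (0 < j)%N -> gamma_dagger pi (P ^+ j) / j%:R = gamma_ps pi P ->
                     (k <= j)%N]].

End Defs.

From HB Require Import structures.
From mathcomp Require Import all_boot all_order all_algebra.
From mathcomp Require Import boolp classical_sets reals.
From mathcomp Require Import complex.
From mathcomp Require Import ring lra.
Import Order.TTheory GRing.Theory Num.Theory.
Set Implicit Arguments. Unset Strict Implicit. Unset Printing Implicit Defensive.
Local Open Scope ring_scope.
Local Open Scope classical_set_scope.

(* Let D = diag (sqrt pi) and B = D^-1 P^T D.  Then D (P^* P) D^-1 = B B^T, and B is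
   an l2-contraction fixing the unit vector sqrt pi: the energy lost in one step is a
   Dirichlet form.  Hence 1 - gamma_dagger (P^k) = lambda_2 (B^k B^kT) is the largest
   Rayleigh quotient of B^k B^kT on the hyperplane orthogonal to sqrt pi, which B^k
   preserves; iterating gives 1 - gamma_dagger (P^(k q)) <= (1 - gamma_dagger (P^k))^q.
   For k = k_ps we have gamma_dagger (P^k) = k gamma_ps =: x, so the ratio of the
   p-skipped chain at k is at least (1 - (1 - x)^p) / k > p gamma_ps (1 - p x / 2).
   Conversely each ratio gamma_dagger ((P^p)^j) / j of the skipped chain is p times the
   ratio of P at p j, hence at most p gamma_ps. *)

Section SecondEigenvalue.
Variables (R : realType) (n : nat) (M : 'M[R]_n) (r : 'I_n -> R).
Hypothesis charM : char_poly M = \prod_i ('X - (r i)%:P).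

Let ord_desc := sort (fun i j => r j <= r i) (enum 'I_n).
Let eigs := [seq r i | i <- ord_desc].

Let ord_desc_perm : perm_eq ord_desc (enum 'I_n).
Proof. by rewrite perm_sort. Qed.

Let size_ord_desc : size ord_desc = n.
Proof. by rewrite (perm_size ord_desc_perm) size_enum_ord. Qed.

Let ge_trans : transitive (fun x y : R => y <= x).
Proof. by move=> a b c /= ba cb; exact: le_trans cb ba. Qed.

Let eigs_sorted : sorted (fun x y : R => y <= x) eigs.
Proof. by rewrite sorted_map; apply: sort_sorted => i j /=; exact: le_total. Qed.

Lemma eigenvalues_descE : eigenvalues_desc M = eigs.
Proof.
have prod_eigs : char_poly M = \prod_(x <- eigs) ('X - x%:P).
  by rewrite big_map (perm_big _ ord_desc_perm) /= charM big_enum.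
have eigs_in : [set s : seq R | sorted (fun x y => y <= x) s /\
                 char_poly M = \prod_(x <- s) ('X - x%:P)] eigs by split.
have [s_sorted s_prod] := xgetI [::] eigs_in.
apply: (sorted_eq ge_trans) => //.
- by move=> a b /andP[ab ba]; apply/eqP; rewrite eq_le ab ba.
- by apply: prod_XsubC_eq; rewrite -s_prod.
Qed.

Let eigs_nth_antimono a b : (a <= b < n)%N -> eigs`_b <= eigs`_a.
Proof.
move=> /andP[ab bn]; apply: (sorted_leq_nth ge_trans (fun x => le_refl x)) => //.
- by rewrite inE size_map size_ord_desc (leq_ltn_trans ab bn).
- by rewrite inE size_map size_ord_desc.
Qed.

Let eigsE i : r i = eigs`_(index i ord_desc).
Proof.
have i_in : i \in ord_desc by rewrite (perm_mem ord_desc_perm) mem_enum.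
by rewrite (nth_map i) ?index_mem // nth_index.
Qed.

Let index_lt i : (index i ord_desc < n)%N.
Proof.
by rewrite -[X in (_ < X)%N]size_ord_desc index_mem (perm_mem ord_desc_perm) mem_enum.
Qed.

Lemma lambda2_ge_either i j : i != j -> r i <= lambda2 M \/ r j <= lambda2 M.
Proof.
move=> ij; rewrite /lambda2 eigenvalues_descE (eigsE i) (eigsE j).
have index_neq : index i ord_desc != index j ord_desc.
  apply: contra ij => /eqP eq_index; apply/eqP.
  by rewrite -(nth_index i (_ : i \in ord_desc)) ?eq_index ?nth_index //
     (perm_mem ord_desc_perm) mem_enum.
case: (posnP (index i ord_desc)) => [i0|i_gt0]; [right|left];
  apply: eigs_nth_antimono; rewrite ?index_lt andbT //.
by rewrite lt0n; apply: contra index_neq => /eqP ->; rewrite i0.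
Qed.

Lemma lambda2_attained : (1 < n)%N ->
  exists i1 i2, [/\ i1 != i2, lambda2 M <= r i1 & lambda2 M = r i2].
Proof.
move=> n_gt1; have size_gt1 : (1 < size ord_desc)%N by rewrite size_ord_desc.
pose i0 : 'I_n := Ordinal (ltnW n_gt1).
exists (nth i0 ord_desc 0), (nth i0 ord_desc 1); split.
- have ord_uniq : uniq ord_desc by rewrite (perm_uniq ord_desc_perm) enum_uniq.
  by rewrite nth_uniq // ltnW.
- rewrite /lambda2 eigenvalues_descE -(nth_map i0 0) ?(ltnW size_gt1) //.
  exact: eigs_nth_antimono.
- by rewrite /lambda2 eigenvalues_descE (nth_map i0).
Qed.

End SecondEigenvalue.

Lemma size_eigenvalues_desc (R : realType) (n : nat) (M : 'M[R]_n) :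
  (size (eigenvalues_desc M) <= n)%N.
Proof.
rewrite /eigenvalues_desc; case: xgetP => [s _ [_ char_s]|_] //.
by rewrite -ltnS -(size_prod_XsubC s id) -char_s size_char_poly.
Qed.

Lemma lambda2_small (R : realType) (n : nat) (M : 'M[R]_n) : (n < 2)%N -> lambda2 M = 0.
Proof.
move=> n_lt2; rewrite /lambda2 nth_default //.
by rewrite -ltnS (leq_ltn_trans (size_eigenvalues_desc M)).
Qed.

Lemma char_poly_similar (F : fieldType) (n : nat) (A V Vinv : 'M[F]_n) :
  Vinv *m V = 1%:M -> char_poly (Vinv *m A *m V) = char_poly A.
Proof.
move=> VinvV; have VVinv : V *m Vinv = 1%:M by apply: mulmx1C.
have char_mx_similar : char_poly_mx (Vinv *m A *m V) =
    map_mx polyC Vinv *m char_poly_mx A *m map_mx polyC V.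
  rewrite /char_poly_mx !map_mxM mulmxBr mulmxBl; congr (_ - _).
  by rewrite mul_mx_scalar -scalemxAl -map_mxM VinvV map_mx1 scalemx1.
rewrite /char_poly char_mx_similar !det_mulmx mulrC mulrA -det_mulmx -map_mxM VVinv.
by rewrite map_mx1 det1 mul1r.
Qed.

Lemma lambda2_similar (R : realType) (n : nat) (A V Vinv : 'M[R]_n) :
  Vinv *m V = 1%:M -> lambda2 (Vinv *m A *m V) = lambda2 A.
Proof. by move=> VinvV; rewrite /lambda2 /eigenvalues_desc char_poly_similar. Qed.

Local Open Scope sesquilinear_scope.

Lemma trmxC_mul (C : numClosedFieldType) m k l (A : 'M[C]_(m, k)) (B : 'M[C]_(k, l)) :
  (A *m B)^t* = B^t* *m A^t*.
Proof. by rewrite trmx_mul map_mxM. Qed.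

Lemma sqnorm_rowE (R : pzRingType) n (v : 'rV[R]_n) : (v *m v^T) 0 0 = \sum_j v 0 j ^+ 2.
Proof. by rewrite mxE; apply: eq_bigr => j _; rewrite mxE expr2. Qed.

Lemma sqnorm_ge0 (R : realDomainType) n (v : 'rV[R]_n) : 0 <= (v *m v^T) 0 0.
Proof. by rewrite sqnorm_rowE sumr_ge0 // => j _; rewrite sqr_ge0. Qed.

Lemma sqnorm_gt0 (R : realType) n (v : 'rV[R]_n) : v != 0 -> 0 < (v *m v^T) 0 0.
Proof.
move=> v_neq0; have [j vj_neq0] : exists j, v 0 j != 0.
  apply/existsP; apply: contraR v_neq0 => /existsPn v0.
  by apply/eqP/rowP => j; rewrite mxE; apply/eqP/negPn/v0.
rewrite sqnorm_rowE (bigD1 j) //= ltr_pwDl ?sumr_ge0 // => [|k _]; last exact: sqr_ge0.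
by rewrite lt_def sqrf_eq0 vj_neq0 sqr_ge0.
Qed.

Section RealRowsInComplex.
Variables (R : realType) (n : nat).
Local Notation C := (complex R).
Local Notation toC := (real_complex R).
Local Notation cplx A := (map_mx toC A).

Lemma conj_real_complex (x : R) : (toC x)^* = toC x.
Proof. by apply: conj_Creal; rewrite /real_complex_def complex_real. Qed.

Lemma trmxC_real m k (A : 'M[R]_(m, k)) : (cplx A)^t* = cplx (A^T).
Proof. by apply/matrixP => i j; rewrite !mxE conj_real_complex. Qed.

Lemma form_real_complex (M : 'M[R]_n) (v w : 'rV[R]_n) :
  (cplx v *m cplx M *m (cplx w)^t*) 0 0 = toC ((v *m M *m w^T) 0 0).
Proof. by rewrite trmxC_real -!map_mxM mxE. Qed.

Lemma dot_real_complex (v w : 'rV[R]_n) :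
  (cplx v *m (cplx w)^t*) 0 0 = toC ((v *m w^T) 0 0).
Proof. by rewrite trmxC_real -!map_mxM mxE. Qed.

Lemma row_ReIm (x : 'rV[C]_n) :
  x = cplx (map_mx (@complex.Re R) x) + 'i *: cplx (map_mx (@complex.Im R) x).
Proof. by apply/matrixP => i j; rewrite !mxE -complexiE; exact: complexE. Qed.

Lemma form_ReIm (M : 'M[R]_n) (a b : 'rV[R]_n) : M^T = M ->
  ((cplx a + 'i *: cplx b) *m cplx M *m (cplx a + 'i *: cplx b)^t*) 0 0 =
  toC ((a *m M *m a^T) 0 0) + toC ((b *m M *m b^T) 0 0).
Proof.
move=> M_sym.
have form_sym : b *m M *m a^T = a *m M *m b^T.
  have tr11 (X : 'M[R]_1) : X^T = X by apply/matrixP => i j; rewrite !ord1 mxE.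
  by rewrite -[LHS]tr11 !trmx_mul trmxK M_sym mulmxA.
have conj_ReIm : (cplx a + 'i *: cplx b)^t* = cplx (a^T) - 'i *: cplx (b^T).
  apply/matrixP => i j; rewrite !mxE rmorphD rmorphM /= !conj_real_complex conjCi.
  by rewrite mulNr.
rewrite conj_ReIm !mulmxDl !mulmxBr -!scalemxAl -!scalemxAr -!map_mxM form_sym !mxE.
have sqri := @sqrCi C.
ring: sqri.
Qed.

Lemma dot_ReIm (a b w : 'rV[R]_n) :
  ((cplx a + 'i *: cplx b) *m (cplx w)^t*) 0 0 =
  Complex ((a *m w^T) 0 0) ((b *m w^T) 0 0).
Proof. by rewrite mulmxDl -scalemxAl trmxC_real -!map_mxM !mxE -complexiE; simpc. Qed.

End RealRowsInComplex.

Section SymmetricRayleigh.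
Variables (R : realType) (n : nat) (S : 'M[R]_n) (u : 'rV[R]_n).
Hypothesis S_sym : S^T = S.
Local Notation C := (complex R).
Local Notation toC := (real_complex R).
Local Notation cplx A := (map_mx toC A).

(* The spectral theorem [orthomx_spectralP] needs an algebraically closed field. *)
Let SC := cplx S.
Let U := spectralmx SC.
Let d := spectral_diag SC.

Let SC_herm : SC \is hermsymmx.
Proof.
apply: realsym_hermsym; last by apply/mxOverP => i j; rewrite mxE complex_real.
by apply/is_hermitianmxP; rewrite expr0 scale1r; apply/matrixP => i j;
  rewrite !mxE /= -[in RHS]S_sym mxE.
Qed.

Let U_unitary : U *m U^t* = 1%:M.
Proof. exact/unitarymxP/spectral_unitarymx. Qed.

Let U_unitaryV : U^t* *m U = 1%:M.
Proof. exact: mulmx1C U_unitary. Qed.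

Let SC_diag : SC = U^t* *m diag_mx d *m U.
Proof.
have /orthomx_spectralP SC_eq := hermitian_normalmx SC_herm.
by rewrite {1}SC_eq invmx_unitary // spectral_unitarymx.
Qed.

Let eig i : R := complex.Re (d 0 i).

Let d_eig i : d 0 i = toC (eig i).
Proof.
rewrite /eig RRe_real //.
by have /mxOverP := hermitian_spectral_diag_real SC_herm; apply.
Qed.

Let char_poly_eig : char_poly S = \prod_i ('X - (eig i)%:P).
Proof.
apply: (@map_poly_inj _ _ toC).
rewrite map_char_poly -/SC SC_diag char_poly_similar //.
rewrite char_poly_trig ?diag_mx_is_trig // rmorph_prod /=.
by apply: eq_bigr => i _; rewrite map_polyXsubC mxE eqxx mulr1n d_eig.
Qed.

Let dot_sum (y w : 'rV[C]_n) : (y *m w^t*) 0 0 = \sum_k y 0 k * (w 0 k)^*.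
Proof. by rewrite mxE; apply: eq_bigr => k _; rewrite !mxE. Qed.

Let dot_unitary (x w : 'rV[C]_n) :
  (x *m w^t*) 0 0 = ((x *m U^t*) *m (w *m U^t*)^t*) 0 0.
Proof. by rewrite trmxC_mul trmxCK mulmxA -(mulmxA x _ U) U_unitaryV mulmx1. Qed.

Let form_eig (x : 'rV[C]_n) : (x *m SC *m x^t*) 0 0 =
  \sum_k toC (eig k) * ((x *m U^t*) 0 k * ((x *m U^t*) 0 k)^*).
Proof.
have -> : x *m SC *m x^t* = (x *m U^t*) *m diag_mx d *m (x *m U^t*)^t*.
  by rewrite SC_diag trmxC_mul trmxCK !mulmxA.
rewrite mul_mx_diag dot_sum; apply: eq_bigr => k _.
by rewrite mxE d_eig mulrCA mulrA.
Qed.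

Let z := cplx u *m U^t*.

(* In eigen-coordinates: supported on the two largest eigenvalues, orthogonal to u. *)
Let rayleighC_witness : (1 < n)%N -> exists x : 'rV[C]_n,
  [/\ x != 0, (x *m (cplx u)^t*) 0 0 = 0 &
      toC (lambda2 S) * (x *m x^t*) 0 0 <= (x *m SC *m x^t*) 0 0].
Proof.
move=> n_gt1; have [i1 [i2 [i12 lam_le1 lam_eq2]]] := lambda2_attained char_poly_eig n_gt1.
set c1 := (z 0 i1)^*; set c2 := (z 0 i2)^*.
pose a := if c1 == 0 then 1 else c2; pose b := if c1 == 0 then 0 else - c1.
pose y : 'rV[C]_n := \row_k (if k == i1 then a else if k == i2 then b else 0).
have i21 : (i2 == i1) = false by apply/negbTE; rewrite eq_sym.
have y1 : y 0 i1 = a by rewrite mxE eqxx.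
have y2 : y 0 i2 = b by rewrite mxE i21 eqxx.
have y0 k : k != i1 -> k != i2 -> y 0 k = 0.
  by move=> k1 k2; rewrite mxE (negbTE k1) (negbTE k2).
have yU : y *m U *m U^t* = y by rewrite -mulmxA U_unitary mulmx1.
exists (y *m U); split.
- apply: contraTneq isT => yU0; have y_eq0 : y = 0 by rewrite -yU yU0 mul0mx.
  have := congr1 (fun M : 'rV[C]_n => (M 0 i1, M 0 i2)) y_eq0.
  rewrite /= y1 y2 !mxE /a /b => -[]; case: eqP => [_ /eqP|/eqP c1_neq0 _ /eqP].
    by rewrite oner_eq0.
  by rewrite oppr_eq0 (negbTE c1_neq0).
- rewrite dot_unitary yU dot_sum -/z (bigD1 i1) //= (bigD1 i2) /=; last by rewrite i21.
  rewrite big1 ?addr0 => [|k /andP[k1 k2]]; last by rewrite y0 // mul0r.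
  rewrite y1 y2 -/c1 -/c2 /a /b; case: eqP => [->|_]; first by rewrite mul1r mul0r addr0.
  by rewrite mulrC mulNr subrr.
- rewrite form_eig dot_unitary yU dot_sum mulr_sumr; apply: ler_sum => k _.
  case: (eqVneq k i1) => [->|k1].
    by apply: ler_wpM2r; [exact: mul_conjC_ge0 | rewrite lecR].
  case: (eqVneq k i2) => [->|k2]; first by rewrite lam_eq2.
  by rewrite y0 // mul0r !mulr0.
Qed.

Lemma exists_rayleigh_ge_lambda2 : (1 < n)%N -> exists v : 'rV[R]_n,
  [/\ v != 0, (v *m u^T) 0 0 = 0 & lambda2 S * (v *m v^T) 0 0 <= (v *m S *m v^T) 0 0].
Proof.
move=> n_gt1; have [x [x_neq0 xu x_ge]] := rayleighC_witness n_gt1.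
(* The real or the imaginary part of x is a real witness. *)
move: x_neq0 xu x_ge; rewrite (row_ReIm x).
set a := map_mx _ x; set b := map_mx _ x => x_neq0.
rewrite dot_ReIm => -[au bu].
have := form_ReIm a b (trmx1 _ _ : (1%:M : 'M[R]_n)^T = 1%:M).
rewrite map_mx1 !mulmx1 -/SC form_ReIm // => ->.
rewrite -!rmorphD -rmorphM lecR mulrDr => ab_ge.
have form0 (w : 'rV[R]_n) : w = 0 -> (w *m S *m w^T) 0 0 = 0 /\ (w *m w^T) 0 0 = 0.
  by move=> ->; rewrite !mul0mx mxE.
case: (eqVneq a 0) => [a0|a_neq0].
  exists b; split => //.
    by apply: contraNneq x_neq0 => b0; rewrite a0 b0 !map_mx0 scaler0 addr0.
  by move: ab_ge; have [-> ->] := form0 a a0; rewrite mulr0 !add0r.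
case: (lerP (lambda2 S * (a *m a^T) 0 0) ((a *m S *m a^T) 0 0)) => a_ge; first by exists a.
exists b; split => //; last lra.
by apply: contraTneq ab_ge => b0; have [-> ->] := form0 b b0; rewrite mulr0 !addr0 -ltNge.
Qed.

Hypothesis S_bounds : forall v : 'rV[R]_n, 0 <= (v *m S *m v^T) 0 0 <= (v *m v^T) 0 0.

Let eig_bounds i : 0 <= eig i <= 1.
Proof.
have : root (char_poly S) (eig i).
  by rewrite char_poly_eig (bigD1 i) //= rootM root_XsubC eqxx.
rewrite -eigenvalue_root_char => /eigenvalueP [v vS v_neq0].
have := S_bounds v; rewrite vS -scalemxAl mxE.
have := sqnorm_gt0 v_neq0; set N := (v *m v^T) 0 0 => N_gt0.
by rewrite (pmulr_lge0 _ N_gt0) -{2}[N]mul1r ler_pM2r.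
Qed.

Lemma lambda2_sym_bounds : 0 <= lambda2 S <= 1.
Proof.
case: (ltnP 1 n) => [n_gt1|n_le1]; last by rewrite lambda2_small ?lexx ?ler01.
by have [i1 [i2 [_ _ ->]]] := lambda2_attained char_poly_eig n_gt1.
Qed.

Hypotheses (u_neq0 : u != 0) (uS : u *m S = u).

Let z_eig k : z 0 k * toC (eig k) = z 0 k.
Proof.
have uSC : cplx u *m SC = cplx u by rewrite -map_mxM uS.
have : cplx u *m SC *m U^t* = z by rewrite uSC.
rewrite SC_diag !mulmxA -(mulmxA _ U) U_unitary mulmx1 -/z.
by move/(congr1 (fun M : 'rV[C]_n => M 0 k)); rewrite mul_mx_diag mxE d_eig.
Qed.

Let z_neq0 : z != 0.
Proof.
apply: contra u_neq0 => /eqP z0; apply/eqP; apply: (@map_mx_inj _ _ toC).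
by rewrite map_mx0 -[LHS]mulmx1 -U_unitaryV mulmxA -/z z0 mul0mx.
Qed.

Let rayleighC_le (x : 'rV[C]_n) : (x *m (cplx u)^t*) 0 0 = 0 ->
  (x *m SC *m x^t*) 0 0 <= toC (lambda2 S) * (x *m x^t*) 0 0.
Proof.
move=> xu; rewrite form_eig dot_unitary dot_sum mulr_sumr; apply: ler_sum => i _.
set y := x *m U^t*.
have yi_ge0 : 0 <= y 0 i * (y 0 i)^* by apply: mul_conjC_ge0.
case: (leP (eig i) (lambda2 S)) => [eig_le|eig_gt].
  by apply: ler_wpM2r => //; rewrite lecR.
suff -> : y 0 i = 0 by rewrite mul0r !mulr0.
have zj0 j : j != i -> z 0 j = 0.
  move=> ji; have eigj_le : eig j <= lambda2 S.
    have ij : i != j by rewrite eq_sym.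
    have [eigi_le|//] := lambda2_ge_either char_poly_eig ij.
    by move: eig_gt; rewrite ltNge eigi_le.
  have : z 0 j * (toC (eig j) - 1) = 0 by rewrite mulrBr z_eig mulr1 subrr.
  move/eqP; rewrite mulf_eq0 => /orP[/eqP //|]; rewrite subr_eq0 -(rmorph1 toC).
  move=> /eqP/(fmorph_inj toC) eigj1.
  have /andP[_ eigi_le1] := eig_bounds i.
  by move: (lt_le_trans (le_lt_trans eigj_le eig_gt) eigi_le1); rewrite eigj1 ltxx.
have zi_neq0 : z 0 i != 0.
  apply: contra z_neq0 => /eqP zi0; apply/eqP/rowP => k; rewrite [RHS]mxE.
  by case: (eqVneq k i) => [->|ki]; [exact: zi0 | exact: zj0].
move: xu; rewrite dot_unitary dot_sum -/y -/z (bigD1 i) //= big1 ?addr0.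
  by move/eqP; rewrite mulf_eq0 conjC_eq0 (negPf zi_neq0) orbF => /eqP.
by move=> k ki; rewrite zj0 // conjC0 mulr0.
Qed.

Lemma rayleigh_le_lambda2 (v : 'rV[R]_n) : (v *m u^T) 0 0 = 0 ->
  (v *m S *m v^T) 0 0 <= lambda2 S * (v *m v^T) 0 0.
Proof.
move=> vu; have := @rayleighC_le (cplx v).
rewrite dot_real_complex vu rmorph0 => /(_ erefl).
by rewrite form_real_complex dot_real_complex -rmorphM lecR.
Qed.

End SymmetricRayleigh.

Section FixedContraction.
Variables (R : realType) (n : nat).
Implicit Types (B : 'M[R]_n) (u v : 'rV[R]_n).

Definition fixed_contraction B u :=
  [/\ u != 0, u *m B = u, B *m u^T = u^T &
      forall v, (v *m B *m (v *m B)^T) 0 0 <= (v *m v^T) 0 0].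

Lemma fixed_contraction_pow B u k : fixed_contraction B u -> fixed_contraction (B ^+ k) u.
Proof.
move=> [u_neq0 uB Bu B_contr]; split => //.
- by elim: k => [|k IHk]; rewrite ?expr0 ?mulmx1 // exprSr mulmxA IHk uB.
- by elim: k => [|k IHk]; rewrite ?expr0 ?mul1mx // exprS -mulmxA IHk Bu.
- elim: k => [|k IHk] v; first by rewrite expr0 mulmx1.
  by rewrite exprSr mulmxA; apply: le_trans (B_contr _) (IHk v).
Qed.

Lemma form_gram B v : (v *m (B *m B^T) *m v^T) 0 0 = (v *m B *m (v *m B)^T) 0 0.
Proof. by rewrite trmx_mul !mulmxA. Qed.

Lemma fixed_contraction_gram B u : fixed_contraction B u ->
  [/\ (B *m B^T)^T = B *m B^T, u *m (B *m B^T) = u &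
      forall v, 0 <= (v *m (B *m B^T) *m v^T) 0 0 <= (v *m v^T) 0 0].
Proof.
move=> [_ uB Bu B_contr]; split.
- by rewrite trmx_mul trmxK.
- by rewrite mulmxA uB -[u in RHS]trmxK -Bu trmx_mul trmxK.
- by move=> v; rewrite form_gram B_contr sqnorm_ge0.
Qed.

Lemma lambda2_gram_bounds B u : fixed_contraction B u -> 0 <= lambda2 (B *m B^T) <= 1.
Proof.
move=> /fixed_contraction_gram[gram_sym _ gram_bounds].
exact: lambda2_sym_bounds gram_sym gram_bounds.
Qed.

Lemma sqnorm_pow_le B u (j : nat) v : fixed_contraction B u -> (v *m u^T) 0 0 = 0 ->
  (v *m B ^+ j *m (v *m B ^+ j)^T) 0 0 <= lambda2 (B *m B^T) ^+ j * (v *m v^T) 0 0.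
Proof.
move=> hB; have [u_neq0 _ Bu _] := hB.
have [gram_sym gram_fix gram_bounds] := fixed_contraction_gram hB.
have /andP[lam_ge0 _] := lambda2_gram_bounds hB.
elim: j v => [|j IHj] v vu; first by rewrite expr0 mulmx1 expr0 mul1r.
rewrite exprS mulmxA exprSr -mulrA.
apply: le_trans (IHj _ _) _; first by rewrite -mulmxA Bu.
apply: ler_wpM2l; first exact: exprn_ge0.
by rewrite -form_gram; exact: (rayleigh_le_lambda2 gram_sym gram_bounds u_neq0 gram_fix vu).
Qed.

Lemma lambda2_gram_pow_le B u p : fixed_contraction B u ->
  lambda2 (B ^+ p *m (B ^+ p)^T) <= lambda2 (B *m B^T) ^+ p.
Proof.
move=> hB; have [gram_sym _ _] := fixed_contraction_gram (fixed_contraction_pow p hB).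
have /andP[lam_ge0 _] := lambda2_gram_bounds hB.
case: (ltnP 1 n) => [n_gt1|n_le1].
  have [v [v_neq0 vu v_ge]] := exists_rayleigh_ge_lambda2 u gram_sym n_gt1.
  rewrite -(ler_pM2r (sqnorm_gt0 v_neq0)); apply: le_trans v_ge _.
  by rewrite form_gram; exact: sqnorm_pow_le hB vu.
by rewrite lambda2_small ?exprn_ge0.
Qed.

Lemma lambda2_gram_lt1 B u : fixed_contraction B u ->
  (forall v, v != 0 -> (v *m u^T) 0 0 = 0 ->
     (v *m B *m (v *m B)^T) 0 0 < (v *m v^T) 0 0) ->
  lambda2 (B *m B^T) < 1.
Proof.
move=> hB B_strict; have [gram_sym _ _] := fixed_contraction_gram hB.
case: (ltnP 1 n) => [n_gt1|n_le1]; last by rewrite lambda2_small ?ltr01.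
have [v [v_neq0 vu v_ge]] := exists_rayleigh_ge_lambda2 u gram_sym n_gt1.
rewrite -(ltr_pM2r (sqnorm_gt0 v_neq0)) mul1r; apply: le_lt_trans v_ge _.
by rewrite form_gram; exact: B_strict.
Qed.

End FixedContraction.

Section Symmetrization.
Variables (R : realType) (n : nat) (pi : 'rV[R]_n).
Hypothesis pi_gt0 : forall i, 0 < pi 0 i.

Definition symmetrization (Q : 'M[R]_n) : 'M[R]_n :=
  diag_mx (map_mx (fun x => (Num.sqrt x)^-1) pi) *m Q^T *m diag_mx (map_mx Num.sqrt pi).

Let sq i := Num.sqrt (pi 0 i).
Let u := map_mx Num.sqrt pi.
Let D := diag_mx u.
Let Dinv := diag_mx (map_mx (fun x => (Num.sqrt x)^-1) pi).

Let sq_gt0 i : 0 < sq i.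
Proof. by rewrite /sq sqrtr_gt0. Qed.

Let sq_neq0 i : sq i != 0.
Proof. by rewrite gt_eqF. Qed.

Let sq_sqr i : sq i ^+ 2 = pi 0 i.
Proof. by rewrite /sq sqr_sqrtr // ltW. Qed.

Let D_Dinv : D *m Dinv = 1%:M.
Proof.
apply/matrixP => i j; rewrite mul_diag_mx !mxE.
by case: eqP => [->|]; rewrite ?mulr1n ?mulr0n ?mulr0 // divff // (sq_neq0 j).
Qed.

Let Dinv_D : Dinv *m D = 1%:M.
Proof. exact: mulmx1C D_Dinv. Qed.

Lemma symmetrizationE Q i j : symmetrization Q i j = (sq i)^-1 * Q j i * sq j.
Proof. by rewrite /symmetrization mul_mx_diag mxE mul_diag_mx !mxE. Qed.

Lemma lambda2_time_reversal Q :
  lambda2 (time_reversal pi Q *m Q) = lambda2 (symmetrization Q *m (symmetrization Q)^T).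
Proof.
have -> : time_reversal pi Q = Dinv *m Dinv *m Q^T *m D *m D.
  apply/matrixP => i j; rewrite -(mulmxA Dinv) !mul_mx_diag !mul_diag_mx !mxE.
  rewrite -/(sq i) -/(sq j) -(sq_sqr i) -(sq_sqr j) !expr2 invfM; field.
  by rewrite !sq_neq0.
rewrite -(lambda2_similar _ D_Dinv); congr lambda2.
rewrite /symmetrization -/u -/D -/Dinv !trmx_mul trmxK !tr_diag_mx -/D -/Dinv.
by rewrite !mulmxA D_Dinv mul1mx.
Qed.

Lemma symmetrization_pow Q k : symmetrization (Q ^+ k) = symmetrization Q ^+ k.
Proof.
elim: k => [|k IHk]; first by rewrite !expr0 /symmetrization trmx1 mulmx1 Dinv_D.
rewrite exprSr exprS -IHk /symmetrization -/u -/D -/Dinv -mulmxE trmx_mul.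
by rewrite !mulmxA -(mulmxA _ D Dinv) D_Dinv mulmx1.
Qed.

Section Stochastic.
Variable Q : 'M[R]_n.
Hypotheses (Q_stoch : row_stochastic Q) (pi_sum : \sum_i pi 0 i = 1).
Hypothesis pi_stat : pi *m Q = pi.

Let ratio (v : 'rV[R]_n) i := v 0 i / sq i.
Let cond_mean (v : 'rV[R]_n) j := \sum_i Q j i * ratio v i.

Let mul_symmetrization v j : (v *m symmetrization Q) 0 j = sq j * cond_mean v j.
Proof.
rewrite mxE mulr_sumr; apply: eq_bigr => i _; rewrite symmetrizationE /ratio; ring.
Qed.

Let sqnorm_ratio v : (v *m v^T) 0 0 = \sum_i pi 0 i * ratio v i ^+ 2.
Proof.
rewrite sqnorm_rowE; apply: eq_bigr => i _.
by rewrite /ratio expr_div_n sq_sqr mulrCA divff ?mulr1 // gt_eqF.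
Qed.

(* The energy lost in one step is the pi-weighted conditional variance of v / sqrt pi. *)
Let dirichlet v :
  (v *m v^T) 0 0 - (v *m symmetrization Q *m (v *m symmetrization Q)^T) 0 0 =
  \sum_j pi 0 j * \sum_i Q j i * (ratio v i - cond_mean v j) ^+ 2.
Proof.
have [_ Q_rows] := Q_stoch.
have -> : (v *m symmetrization Q *m (v *m symmetrization Q)^T) 0 0 =
    \sum_j pi 0 j * cond_mean v j ^+ 2.
  rewrite sqnorm_rowE; apply: eq_bigr => j _.
  by rewrite mul_symmetrization exprMn sq_sqr.
have -> : (v *m v^T) 0 0 = \sum_j pi 0 j * \sum_i Q j i * ratio v i ^+ 2.
  rewrite sqnorm_ratio; under [RHS]eq_bigr do rewrite mulr_sumr.
  rewrite exchange_big /=; apply: eq_bigr => i _.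
  rewrite -[in LHS](congr1 (fun M : 'rV_n => M 0 i) pi_stat) mxE mulr_suml.
  by apply: eq_bigr => j _; rewrite mulrA.
rewrite -sumrB; apply: eq_bigr => j _; rewrite -mulrBr; congr (_ * _).
rewrite [RHS](eq_bigr (fun i => Q j i * ratio v i ^+ 2
    - 2 * cond_mean v j * (Q j i * ratio v i) + cond_mean v j ^+ 2 * Q j i)); last first.
  by move=> i _; ring.
by rewrite !big_split /= sumrN -!mulr_sumr Q_rows -/(cond_mean v j); ring.
Qed.

Let energy_ge0 v j : 0 <= pi 0 j * \sum_i Q j i * (ratio v i - cond_mean v j) ^+ 2.
Proof.
have [Q_ge0 _] := Q_stoch.
apply: mulr_ge0; first exact: ltW.
by apply: sumr_ge0 => i _; rewrite mulr_ge0 ?sqr_ge0.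
Qed.

Lemma symmetrization_fixed_contraction : fixed_contraction (symmetrization Q) u.
Proof.
have [_ Q_rows] := Q_stoch.
split.
- apply: contraTneq isT => u0.
  have sq0 i : sq i = 0 by have := congr1 (fun M : 'rV_n => M 0 i) u0; rewrite !mxE.
  have := pi_sum; rewrite big1 => [/eqP|i _]; last by rewrite -sq_sqr sq0 expr0n.
  by rewrite eq_sym oner_eq0.
- apply/rowP => j; rewrite mul_symmetrization /cond_mean /ratio mxE.
  under eq_bigr do rewrite mxE divff ?sq_neq0 // mulr1.
  by rewrite Q_rows mulr1.
- apply/matrixP => i k; rewrite ord1 !mxE -/(sq i).
  under eq_bigr => j _ do rewrite symmetrizationE !mxE -/(sq j).
  have pi_i : pi 0 i = \sum_j pi 0 j * Q j i by rewrite -{1}pi_stat mxE.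
  transitivity ((sq i)^-1 * pi 0 i).
    rewrite pi_i mulr_sumr; apply: eq_bigr => j _; rewrite -(sq_sqr j) expr2; ring.
  by rewrite -sq_sqr expr2 mulrA mulVf ?sq_neq0 ?mul1r.
- by move=> v; rewrite -subr_ge0 dirichlet sumr_ge0.
Qed.

Lemma symmetrization_strict : (forall i j, 0 < Q i j) ->
  forall v : 'rV[R]_n, v != 0 -> (v *m u^T) 0 0 = 0 ->
  (v *m symmetrization Q *m (v *m symmetrization Q)^T) 0 0 < (v *m v^T) 0 0.
Proof.
move=> Q_gt0 v v_neq0 vu; rewrite -subr_gt0 dirichlet.
rewrite lt_def sumr_ge0 // andbT.
apply: contraNneq v_neq0 => /(psumr_eq0P (fun j _ => energy_ge0 v j)) dir0.
(* Zero energy forces v / sqrt pi to be constant; orthogonality to sqrt pi makes it 0. *)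
have ratio_const i j : ratio v i = cond_mean v j.
  have /eqP := dir0 j isT; rewrite mulf_eq0 gt_eqF //= => /eqP var0.
  have /eqP : Q j i * (ratio v i - cond_mean v j) ^+ 2 = 0.
    apply: (psumr_eq0P _ var0) => // k _.
    by apply: mulr_ge0; [exact: ltW | exact: sqr_ge0].
  by rewrite mulf_eq0 gt_eqF //= sqrf_eq0 subr_eq0 => /eqP.
apply/eqP/rowP => i; rewrite mxE.
have mean0 : cond_mean v i = 0.
  move: vu; rewrite mxE (eq_bigr (fun j => cond_mean v i * pi 0 j)) => [|j _].
    by rewrite -mulr_sumr pi_sum mulr1.
  rewrite -(ratio_const j i) !mxE -/(sq j) /ratio -(sq_sqr j) expr2; field.
  exact: sq_neq0.
have := ratio_const i i; rewrite mean0 /ratio => /eqP.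
by rewrite mulf_eq0 invr_eq0 (negbTE (sq_neq0 i)) orbF => /eqP.
Qed.

End Stochastic.

End Symmetrization.

Lemma expn_one_sub_le (R : realFieldType) (x : R) (p : nat) : 0 <= x <= 1 ->
  (1 - x) ^+ p <= 1 - p%:R * x + p%:R * (p%:R - 1) / 2 * x ^+ 2.
Proof.
move=> /andP[x_ge0 x_le1]; elim: p => [|p IHp]; first by rewrite expr0 !mul0r subr0 addr0.
have coef_ge0 : 0 <= p%:R * (p%:R - 1) :> R.
  by case: p {IHp} => [|p]; rewrite ?mul0r // mulr_ge0 // subr_ge0 ler1n.
rewrite exprSr; apply: le_trans (ler_wpM2r _ IHp) _; first by rewrite subr_ge0.
rewrite -subr_ge0 -[p.+1%:R]natr1.
have -> : 1 - (p%:R + 1) * x + (p%:R + 1) * (p%:R + 1 - 1) / 2 * x ^+ 2 -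
    (1 - p%:R * x + p%:R * (p%:R - 1) / 2 * x ^+ 2) * (1 - x) =
    p%:R * (p%:R - 1) * x ^+ 3 / 2 :> R by field.
by rewrite divr_ge0 // mulr_ge0 // exprn_ge0.
Qed.

Lemma one_sub_expn_gt (R : realFieldType) (x : R) (p : nat) : 0 < x <= 1 -> (0 < p)%N ->
  p%:R * x * (1 - p%:R * x / 2) < 1 - (1 - x) ^+ p.
Proof.
move=> /andP[x_gt0 x_le1] p_gt0.
apply: lt_le_trans (lerB (lexx 1) (expn_one_sub_le p _)); last by rewrite ltW.
rewrite -subr_gt0.
have -> : 1 - (1 - p%:R * x + p%:R * (p%:R - 1) / 2 * x ^+ 2) -
    p%:R * x * (1 - p%:R * x / 2) = p%:R * x ^+ 2 / 2 :> R by field.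
by rewrite divr_gt0 // mulr_gt0 ?ltr0n // exprn_gt0.
Qed.

Lemma exists_max_nat (R : realDomainType) (f : nat -> R) (N : nat) :
  exists2 K, (0 < K <= N.+1)%N & forall j, (0 < j <= N.+1)%N -> f j <= f K.
Proof.
pose one : 'I_N.+2 := Ordinal (isT : 1 < N.+2)%N.
have [K K_gt0 K_max] := @arg_maxP _ _ 'I_N.+2 one (fun i => 0 < i)%N (fun i => f i) isT.
exists K; first by rewrite K_gt0 -ltnS ltn_ord.
by move=> j /andP[j_gt0 j_le]; exact: (K_max (Ordinal (j_le : j < N.+2)%N)).
Qed.

Section MarkovPowers.
Variables (R : realType) (n : nat) (P : 'M[R]_n).

Lemma row_stochastic_pow k : row_stochastic P -> row_stochastic (P ^+ k).
Proof.
move=> [P_ge0 P_rows]; elim: k => [|k [IH_ge0 IH_rows]].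
  rewrite expr0; split=> [i j|i]; first by rewrite mxE ler0n.
  rewrite (bigD1 i) //= mxE eqxx big1 ?addr0 // => j ji.
  by rewrite mxE eq_sym (negbTE ji).
rewrite exprSr -mulmxE; split=> [i j|i].
  by rewrite mxE; apply: sumr_ge0 => l _; apply: mulr_ge0.
under eq_bigr do rewrite mxE.
rewrite exchange_big /= -(IH_rows i); apply: eq_bigr => l _.
by rewrite -mulr_sumr P_rows mulr1.
Qed.

Lemma stationary_pow (pi : 'rV[R]_n) k : pi *m P = pi -> pi *m P ^+ k = pi.
Proof.
move=> pi_stat; elim: k => [|k IHk]; first by rewrite expr0 mulmx1.
by rewrite exprSr -mulmxE mulmxA IHk pi_stat.
Qed.

Lemma positive_powS k : row_stochastic P ->
  (forall i j, 0 < (P ^+ k) i j) -> forall i j, 0 < (P ^+ k.+1) i j.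
Proof.
move=> [P_ge0 P_rows] Pk_gt0 i j; rewrite exprS -mulmxE mxE.
have /existsP [l Pil_gt0] : [exists l, 0 < P i l].
  apply: contraT => /existsPn Pi_le0; have := P_rows i.
  rewrite big1 => [/eqP|l _]; first by rewrite eq_sym oner_eq0.
  by apply/eqP; rewrite eq_le P_ge0 andbT leNgt Pi_le0.
rewrite (bigD1 l) //= ltr_pwDl ?mulr_gt0 ?sumr_ge0 // => l' _.
by apply: mulr_ge0 => //; exact: ltW.
Qed.

End MarkovPowers.

Section PseudoSpectralGap.
Variables (R : realType) (n : nat) (pi : 'rV[R]_n).
Hypotheses (pi_gt0 : forall i, 0 < pi 0 i) (pi_sum : \sum_i pi 0 i = 1).

Lemma gamma_ps_le (Q : 'M[R]_n) (c : R) :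
  (forall k, (0 < k)%N -> gamma_dagger pi (Q ^+ k) / k%:R <= c) ->
  gamma_ps pi Q <= c.
Proof.
move=> ratio_le; apply: ge_sup; last by move=> _ [k k_gt0 ->]; exact: ratio_le.
by exists (gamma_dagger pi (Q ^+ 1) / 1%:R), 1%N.
Qed.

Section Chain.
Variable Q : 'M[R]_n.
Hypotheses (Q_stoch : row_stochastic Q) (pi_stat : pi *m Q = pi).
Local Notation B := (symmetrization pi Q).

Let B_contr : fixed_contraction B (map_mx Num.sqrt pi).
Proof. exact: symmetrization_fixed_contraction. Qed.

Lemma one_sub_gamma_dagger_pow k :
  1 - gamma_dagger pi (Q ^+ k) = lambda2 (B ^+ k *m (B ^+ k)^T).
Proof.
rewrite /gamma_dagger (lambda2_time_reversal pi_gt0 (Q ^+ k)) (symmetrization_pow pi_gt0).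
by move: (lambda2 _) => l; rewrite subKr.
Qed.

Lemma gamma_dagger_pow_bounds k : 0 <= gamma_dagger pi (Q ^+ k) <= 1.
Proof.
have := one_sub_gamma_dagger_pow k.
have /andP[] := lambda2_gram_bounds (fixed_contraction_pow k B_contr).
by move: (lambda2 _) => l l_ge0 l_le1 l_eq; apply/andP; split; lra.
Qed.

Lemma gamma_dagger_powM k q :
  1 - gamma_dagger pi (Q ^+ (k * q)) <= (1 - gamma_dagger pi (Q ^+ k)) ^+ q.
Proof.
rewrite !one_sub_gamma_dagger_pow exprM.
exact: lambda2_gram_pow_le (fixed_contraction_pow k B_contr).
Qed.

Lemma gamma_dagger_pow_ratio_le k : (0 < k)%N -> gamma_dagger pi (Q ^+ k) / k%:R <= k%:R^-1.
Proof.
move=> k_gt0; rewrite -[leRHS]mul1r ler_pM2r ?invr_gt0 ?ltr0n //.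
by have /andP[] := gamma_dagger_pow_bounds k.
Qed.

Lemma gamma_ps_ge k : (0 < k)%N -> gamma_dagger pi (Q ^+ k) / k%:R <= gamma_ps pi Q.
Proof.
move=> k_gt0; apply: ub_le_sup; last by exists k.
exists 1 => _ [j j_gt0 ->]; apply: le_trans (gamma_dagger_pow_ratio_le j_gt0) _.
by rewrite invf_le1 ?ler1n ?ltr0n.
Qed.

End Chain.

Lemma gamma_ps_skip_le (Q : 'M[R]_n) (p : nat) : row_stochastic Q -> pi *m Q = pi ->
  (0 < p)%N -> gamma_ps pi (Q ^+ p) <= p%:R * gamma_ps pi Q.
Proof.
move=> Q_stoch pi_stat p_gt0.
apply: gamma_ps_le => j j_gt0.
have pj_gt0 : (0 < p * j)%N by rewrite muln_gt0 p_gt0.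
rewrite -exprM.
apply: le_trans (ler_wpM2l (ler0n _ p) (gamma_ps_ge Q_stoch pi_stat pj_gt0)).
rewrite natrM le_eqVlt; apply/orP; left; apply/eqP; field.
by rewrite !pnatr_eq0 -!lt0n j_gt0 p_gt0.
Qed.

Lemma gamma_ps_skip_ge (Q : 'M[R]_n) (p k : nat) : row_stochastic Q -> pi *m Q = pi ->
  (0 < k)%N -> (1 - (1 - gamma_dagger pi (Q ^+ k)) ^+ p) / k%:R <= gamma_ps pi (Q ^+ p).
Proof.
move=> Q_stoch pi_stat k_gt0.
have := gamma_ps_ge (row_stochastic_pow p Q_stoch) (stationary_pow p pi_stat) k_gt0.
apply: le_trans.
rewrite -exprM mulnC ler_pM2r ?invr_gt0 ?ltr0n // lerBlDr addrC -lerBlDr.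
exact: gamma_dagger_powM.
Qed.

Section Primitive.
Variable P : 'M[R]_n.
Hypotheses (P_stoch : row_stochastic P) (P_prim : primitive P) (pi_stat : pi *m P = pi).
Local Notation ratio k := (gamma_dagger pi (P ^+ k) / k%:R).

Lemma gamma_dagger_primitive : exists2 m, (0 < m)%N & 0 < gamma_dagger pi (P ^+ m).
Proof.
have [k Pk_gt0] := P_prim; exists k.+1 => //.
have Pk1_stoch := row_stochastic_pow k.+1 P_stoch.
have Pk1_stat := stationary_pow k.+1 pi_stat.
rewrite /gamma_dagger (lambda2_time_reversal pi_gt0 (P ^+ k.+1)) subr_gt0.
have := symmetrization_fixed_contraction pi_gt0 Pk1_stoch pi_sum Pk1_stat.
move/lambda2_gram_lt1; apply.
exact: (symmetrization_strict pi_gt0 Pk1_stoch pi_sum Pk1_stat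
  (positive_powS P_stoch Pk_gt0)).
Qed.

(* Since [ratio j <= 1/j], only the finitely many [j] with [1/j >= ratio m] can beat [m]. *)
Let ratio_max : exists2 K, (0 < K)%N & forall j, (0 < j)%N -> ratio j <= ratio K.
Proof.
have [m m_gt0 Gm_gt0] := gamma_dagger_primitive.
have ratio_m_gt0 : 0 < ratio m by rewrite divr_gt0 ?ltr0n.
pose N := Num.truncn (ratio m)^-1.
have N_large : (N.+1%:R)^-1 < ratio m.
  by rewrite invf_plt ?posrE ?ltr0n // truncnS_gt.
have ratio_small j : (N.+1 < j)%N -> ratio j < ratio m.
  move=> j_gt; have j_gt0 : (0 < j)%N := leq_ltn_trans (leq0n _) j_gt.
  apply: le_lt_trans (gamma_dagger_pow_ratio_le P_stoch pi_stat j_gt0) (lt_trans _ N_large).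
  by rewrite ltf_pV2 ?posrE ?ltr0n // ltr_nat.
have [K /andP[K_gt0 _] K_max] := exists_max_nat (fun j => ratio j) N.
have m_le : (m <= N.+1)%N by rewrite leqNgt; apply/negP => /ratio_small; rewrite ltxx.
exists K => // j j_gt0; case: (leqP j N.+1) => [j_le|j_gt].
  by apply: K_max; rewrite j_gt0.
by apply: le_trans (ltW (ratio_small _ j_gt)) (K_max _ _); rewrite m_gt0.
Qed.

Lemma gamma_ps_attained : exists2 K, (0 < K)%N & ratio K = gamma_ps pi P.
Proof.
have [K K_gt0 K_max] := ratio_max; exists K => //; apply/eqP.
by rewrite eq_le gamma_ps_ge //=; apply: gamma_ps_le.
Qed.

Lemma gamma_ps_gt0 : 0 < gamma_ps pi P.
Proof.
have [m m_gt0 Gm_gt0] := gamma_dagger_primitive.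
by apply: lt_le_trans (gamma_ps_ge P_stoch pi_stat m_gt0); rewrite divr_gt0 ?ltr0n.
Qed.

Lemma k_psP : (0 < k_ps pi P)%N /\ ratio (k_ps pi P) = gamma_ps pi P.
Proof.
have [K K_gt0 K_eq] := gamma_ps_attained.
have ex_k : exists k, (0 < k)%N && (ratio k == gamma_ps pi P).
  by exists K; rewrite K_gt0 K_eq eqxx.
have [k /andP[k_gt0 /eqP k_eq] k_min] := ex_minnP ex_k.
have k_in : [set k : nat | [/\ (0 < k)%N, ratio k = gamma_ps pi P &
    forall j : nat, (0 < j)%N -> ratio j = gamma_ps pi P -> (k <= j)%N]] k.
  by split => // j j_gt0 j_eq; apply: k_min; rewrite j_gt0 j_eq eqxx.
by have [] := xgetI 0%N k_in.
Qed.

Lemma gamma_ps_skip_gt p : (0 < p)%N ->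
  p%:R * gamma_ps pi P * (1 - p%:R * (k_ps pi P)%:R * gamma_ps pi P / 2) <
  gamma_ps pi (P ^+ p).
Proof.
move=> p_gt0; have [k_gt0 k_ratio] := k_psP.
have k_pos : (0 : R) < (k_ps pi P)%:R by rewrite ltr0n.
have Gk : gamma_dagger pi (P ^+ k_ps pi P) = (k_ps pi P)%:R * gamma_ps pi P.
  by rewrite -k_ratio mulrC divfK // gt_eqF.
have kg_bounds : 0 < (k_ps pi P)%:R * gamma_ps pi P <= 1.
  rewrite mulr_gt0 ?gamma_ps_gt0 // -Gk.
  by have /andP[] := gamma_dagger_pow_bounds P_stoch pi_stat (k_ps pi P).
apply: lt_le_trans (gamma_ps_skip_ge p P_stoch pi_stat k_gt0).
rewrite Gk ltr_pdivlMr //; move: kg_bounds.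
move: (k_ps pi P)%:R (gamma_ps pi P) => k g kg_bounds.
have -> : p%:R * g * (1 - p%:R * k * g / 2) * k = p%:R * (k * g) * (1 - p%:R * (k * g) / 2).
  by ring.
exact: one_sub_expn_gt.
Qed.

End Primitive.

End PseudoSpectralGap.

Theorem mainTheorem4 (R : realType) (n : nat) (P : 'M[R]_n) (pi : 'rV[R]_n) :
  row_stochastic P -> primitive P ->
  stationary_dist P pi -> (forall i, 0 < pi 0 i) ->
  forall p : nat, (1 <= p)%N ->
    let g := gamma_ps pi P in
    let k := k_ps pi P in
    let gp := gamma_ps pi (P ^+ p) in
    (p%:R * g * (1 - p%:R * k%:R * g / 2) < gp /\ gp <= p%:R * g) /\
    (p%:R <= 1 / (k%:R * g) -> p%:R * g / 2 <= gp).
Proof.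
move=> P_stoch P_prim [_ [pi_sum pi_stat]] pi_gt0 p p_gt0 g k gp.
have lower : p%:R * g * (1 - p%:R * k%:R * g / 2) < gp :=
  gamma_ps_skip_gt pi_gt0 pi_sum P_stoch P_prim pi_stat p_gt0.
have upper : gp <= p%:R * g := gamma_ps_skip_le pi_gt0 pi_sum P_stoch pi_stat p_gt0.
have g_gt0 : 0 < g := gamma_ps_gt0 pi_gt0 pi_sum P_stoch P_prim pi_stat.
have k_gt0 : (0 < k)%N := (k_psP pi_gt0 pi_sum P_stoch P_prim pi_stat).1.
have kg_gt0 : 0 < k%:R * g by rewrite mulr_gt0 ?ltr0n.
clearbody g k gp; split=> // p_le; apply: le_trans (ltW lower); rewrite -subr_ge0.
have -> : p%:R * g * (1 - p%:R * k%:R * g / 2) - p%:R * g / 2 =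
    p%:R * g * (1 - p%:R * (k%:R * g)) / 2 by field.
apply: divr_ge0 => //; apply: mulr_ge0; first exact: mulr_ge0 (ler0n _ _) (ltW g_gt0).
by rewrite subr_ge0 -ler_pdivlMr.
Qed.
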